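(* Let $n\ge 1$, $d=2^n$, and let $C=\mathcal{O}(1)$ be a constant. In the minus sign search problem, one is given vectors $x_1,\ldots,x_C\in\mathbb{C}^d$ such that for one unknown index $k^*\in\{1,\ldots,C\}$ we have $x_{k^*}=(-\tfrac{1}{\sqrt d},\tfrac{1}{\sqrt d},\ldots,\tfrac{1}{\sqrt d})$, while $x_i=(\tfrac{1}{\sqrt d},\ldots,\tfrac{1}{\sqrt d})$ for all $i\neq k^*$; the goal is to identify $k^*$. Any quantum algorithm that has access to copies of the $n$-qubit states $|x_1\rangle,\ldots,|x_C\rangle$ (where $|x\rangle=\sum_i x_i|i\rangle$) requires $\Omega(2^n)$ time to solve the minus sign search problem.
   Context: A quantum algorithm with quantum state inputs may request any number of copies of each state $|x_1\rangle,\ldots,|x_C\rangle$, each copy having unit cost, and may then perform arbitrary quantum operations and measurements; its running time is at least the total number of copies it uses. ''Solving'' the problem means outputting the correct index $k^*$ with probability at least $0.9$, for each possible value of $k^*$. *)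

From HB Require Import structures.
From mathcomp Require Import all_boot all_order all_algebra all_field.
Set Implicit Arguments. Unset Strict Implicit. Unset Printing Implicit Defensive.
Import Order.TTheory GRing.Theory Num.Theory.
Local Open Scope ring_scope.

Definition mss_vec (n C : nat) (kstar i : 'I_C) (b : 'I_(2 ^ n)) : algC :=
  (if (i == kstar) && (val b == 0)%N then -1 else 1) / sqrtC (2 ^ n)%:R.

(* Computational basis of T copies of n-qubit registers. *)
Notation mss_basis n T := {ffun 'I_T -> 'I_(2 ^ n)}.

(* Joint input state: copy j (j < T) is a copy of |x_{f j}>; the joint state is
   the tensor product  (x) _j |x_{f j}>, written in coordinates. *)
Definition mss_state (n C T : nat) (f : 'I_T -> 'I_C) (kstar : 'I_C)
  (a : mss_basis n T) : algC :=
  \prod_(j < T) @mss_vec n C kstar (f j) (a j).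

Definition is_povm (I J : finType) (E : J -> I -> I -> algC) : Prop :=
  (forall j (v : I -> algC),
      0 <= \sum_(a : I) \sum_(b : I) (v a)^* * E j a b * v b) /\
  (forall a b : I, \sum_(j : J) E j a b = (a == b)%:R).

Definition outcome_prob (I J : finType) (E : J -> I -> I -> algC)
  (psi : I -> algC) (j : J) : algC :=
  \sum_(a : I) \sum_(b : I) (psi a)^* * E j a b * psi b.

From HB Require Import structures.
From mathcomp Require Import all_boot all_order all_algebra all_field.
From mathcomp Require Import ring.
Import Order.TTheory GRing.Theory Num.Theory.
Set Implicit Arguments. Unset Strict Implicit. Unset Printing Implicit Defensive.
Local Open Scope ring_scope.

(* Let psi_k be the joint input state when the hidden index is k.  An outcome
   k seen with probability >= 9/10 on psi_k, while the effect of another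
   outcome l takes weight >= 9/10 of psi_l, forces |psi_k - psi_l|^2 >= 7/20,
   because 0 <= E_k <= 1.  On the other hand psi_k and psi_l differ only in
   the M copies of x_k or x_l, each contributing a factor <x_k, x_l> = 1 - 2/d
   to their inner product, so |psi_k - psi_l|^2 = 2 - 2 (1 - 2/d)^M <= 4 M / d
   by Bernoulli's inequality.  Hence T >= M >= 7 d / 80. *)

Section SesquilinearForms.
Variable I : finType.

Definition dotC (u v : I -> algC) : algC := \sum_a (u a)^* * v a.

Definition qform (M : I -> I -> algC) (u v : I -> algC) : algC :=
  \sum_a \sum_b (u a)^* * M a b * v b.

Lemma dotCBl u v w : dotC (u \- v) w = dotC u w - dotC v w.
Proof.
by rewrite /dotC -sumrB; apply: eq_bigr => a _; rewrite /= rmorphB mulrBl.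
Qed.

Lemma dotCBr u v w : dotC u (v \- w) = dotC u v - dotC u w.
Proof. by rewrite /dotC -sumrB; apply: eq_bigr => a _; rewrite mulrBr. Qed.

Lemma qformBl M u v w : qform M (u \- v) w = qform M u w - qform M v w.
Proof.
rewrite /qform -sumrB; apply: eq_bigr => a _; rewrite -sumrB.
by apply: eq_bigr => b _; rewrite /= rmorphB !mulrBl.
Qed.

Lemma qformBr M u v w : qform M u (v \- w) = qform M u v - qform M u w.
Proof.
rewrite /qform -sumrB; apply: eq_bigr => a _; rewrite -sumrB.
by apply: eq_bigr => b _; rewrite mulrBr.
Qed.

(* Twice the gap is [qform M (u - 2 v) (u - 2 v) >= 0]. *)
Lemma qform_sub_ge M u v :
  (forall w, 0 <= qform M w w) ->
  qform M u u / 2 - qform M v v <= qform M (u \- v) (u \- v).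
Proof.
move=> M_ge0; rewrite -subr_ge0.
have := M_ge0 ((u \- v) \- v); rewrite !(qformBl, qformBr).
set Quu := qform M u u; set Quv := qform M u v.
set Qvu := qform M v u; set Qvv := qform M v v => Q_ge0.
rewrite -[X in 0 <= X](@mulfK _ 2) ?pnatr_eq0 // divr_ge0 ?ler0n //.
by congr (_ <= _): Q_ge0; field.
Qed.

End SesquilinearForms.

Section Povm.
Variables (I J : finType) (E : J -> I -> I -> algC).
Hypothesis E_povm : is_povm E.

Lemma povm_ge0 j v : 0 <= qform (E j) v v.
Proof. exact: E_povm.1. Qed.

Lemma povm_sum v : \sum_j qform (E j) v v = dotC v v.
Proof.
rewrite /qform /dotC exchange_big; apply: eq_bigr => a _.
rewrite exchange_big (bigD1 a) //= [X in _ + X]big1 => [|b ba].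
  by rewrite addr0 -mulr_suml -mulr_sumr E_povm.2 eqxx mulr1.
by rewrite -mulr_suml -mulr_sumr E_povm.2 eq_sym (negbTE ba) mulr0 mul0r.
Qed.

Lemma povm_le_dotC j v : qform (E j) v v <= dotC v v.
Proof.
by rewrite -povm_sum (bigD1 j) //= lerDl sumr_ge0 // => i _; apply: povm_ge0.
Qed.

Lemma povm_addr_le_dotC k l v :
  k != l -> qform (E k) v v + qform (E l) v v <= dotC v v.
Proof.
move=> kl; rewrite -povm_sum (bigD1 k) //= (bigD1 l) 1?eq_sym //=.
by rewrite addrA lerDl sumr_ge0 // => i _; apply: povm_ge0.
Qed.

Lemma povm_distinguish k l u v (p : algC) :
  k != l -> dotC v v = 1 -> p <= qform (E k) u u -> p <= qform (E l) v v ->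
  p / 2 - (1 - p) <= dotC (u \- v) (u \- v).
Proof.
move=> kl v_unit pu pv.
apply: le_trans (povm_le_dotC k _).
apply: le_trans (qform_sub_ge u v (@povm_ge0 k)).
apply: lerB; first by rewrite ler_pM2r ?invr_gt0 ?ltr0n.
by rewrite lerBrDr -v_unit (le_trans _ (povm_addr_le_dotC v kl)) // lerD2l.
Qed.

End Povm.

Lemma dotC_tensor (T : nat) (K : finType) (u v : 'I_T -> K -> algC) :
  dotC (fun a : {ffun 'I_T -> K} => \prod_j u j (a j))
       (fun a : {ffun 'I_T -> K} => \prod_j v j (a j)) =
  \prod_j dotC (u j) (v j).
Proof.
rewrite /dotC (bigA_distr_bigA (fun j b => (u j b)^* * v j b)) /=.
by apply: eq_bigr => a _; rewrite rmorph_prod -big_split.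
Qed.

Lemma bernoulli (R : numDomainType) (x : R) m :
  0 <= x <= 1 -> 1 - m%:R * x <= (1 - x) ^+ m.
Proof.
case/andP=> x_ge0 x_le1; elim: m => [|m IHm]; first by rewrite mul0r subr0.
rewrite exprSr (le_trans _ (ler_wpM2r _ IHm)) ?subr_ge0 //.
have -> : (1 - m%:R * x) * (1 - x) = 1 - m.+1%:R * x + m%:R * x * x.
  by rewrite -natr1; ring.
by rewrite lerDl !mulr_ge0.
Qed.

Section MinusSignSearch.
Variables n C : nat.
Local Notation d := ((2 ^ n)%:R : algC).

Lemma mss_vec_conj k i b : (@mss_vec n C k i b)^* = mss_vec k i b.
Proof.
have sqrt_real : sqrtC d \is Num.real by rewrite ger0_real ?sqrtC_ge0 ?ler0n.
rewrite conj_Creal // rpredM ?rpredV //.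
by case: ifP; rewrite ?rpredN rpred1.
Qed.

Lemma mss_vec_mul k l i b :
  @mss_vec n C k i b * mss_vec l i b =
  (if (val b == 0)%N && ((i == k) != (i == l)) then -1 else 1) / d.
Proof.
have sqrt_neq0 : sqrtC d != 0 by rewrite sqrtC_eq0 pnatr_eq0 expn_eq0.
rewrite /mss_vec -[d in RHS]sqrtCK.
by case: (i == k); case: (i == l); case: (val b == 0)%N => /=; field.
Qed.

Lemma dotC_mss_vec k l i :
  dotC (@mss_vec n C k i) (mss_vec l i) =
  if (i == k) != (i == l) then 1 - 2 / d else 1.
Proof.
have d_gt0 : (0 < 2 ^ n)%N by rewrite expn_gt0.
have d_neq0 : d != 0 by rewrite pnatr_eq0 -lt0n.
rewrite /dotC; under eq_bigr do rewrite mss_vec_conj mss_vec_mul.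
rewrite -mulr_suml; case: ifP => kl; last first.
  rewrite (eq_bigr (fun=> 1)) => [|b _]; last by rewrite andbF.
  by rewrite sumr_const card_ord divff.
rewrite (bigD1 (Ordinal d_gt0)) //= (eq_bigr (fun=> 1)) => [|b nb0]; last first.
  by rewrite andbT ifN //; apply: contra nb0 => /eqP b0; apply/eqP/val_inj.
have d_pred : d = (2 ^ n).-1%:R + 1 by rewrite natr1 prednK.
by move: d_neq0; rewrite sumr_const cardC1 card_ord d_pred => ?; field.
Qed.

Variables (T : nat) (f : 'I_T -> 'I_C).
Local Notation psi := (@mss_state n C T f).

Lemma dotC_mss_state k l :
  dotC (psi k) (psi l) = (1 - 2 / d) ^+ #|[pred j | (f j == k) != (f j == l)]|.
Proof.
rewrite /mss_state.
rewrite (dotC_tensor (fun j => mss_vec k (f j)) (fun j => mss_vec l (f j))).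
by under eq_bigr do rewrite dotC_mss_vec; rewrite -big_mkcond prodr_const.
Qed.

Lemma dotC_mss_state_id k : dotC (psi k) (psi k) = 1.
Proof.
rewrite dotC_mss_state (eq_card0 (_ : _ =i pred0)) // => j.
by rewrite !inE eqxx.
Qed.

Lemma dotC_mss_state_sub k l :
  dotC (psi k \- psi l) (psi k \- psi l) =
  2 - 2 * (1 - 2 / d) ^+ #|[pred j | (f j == k) != (f j == l)]|.
Proof.
rewrite !(dotCBl, dotCBr) !dotC_mss_state_id !dotC_mss_state.
rewrite (eq_card (_ : [pred j | (f j == l) != (f j == k)] =i
                      [pred j | (f j == k) != (f j == l)])); first by ring.
by move=> j; rewrite !inE eq_sym.
Qed.

Lemma dotC_mss_state_sub_le k l :
  (1 <= n)%N -> dotC (psi k \- psi l) (psi k \- psi l) <= 4 * T%:R / d.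
Proof.
move=> n_ge1; rewrite dotC_mss_state_sub; set M := #|_|.
have d_ge2 : 2 <= d by rewrite (ler_nat _ 2) -[2%N]expn1 leq_pexp2l.
have d_gt0 : 0 < d by apply: lt_le_trans d_ge2.
have two_div_d : 0 <= 2 / d <= 1.
  by rewrite divr_ge0 ?ler0n // ler_pdivrMr // mul1r.
rewrite (le_trans (_ : _ <= 4 * M%:R / d)) //.
  have -> : 4 * M%:R / d = 2 - 2 * (1 - M%:R * (2 / d)) by ring.
  by rewrite lerD2l lerN2 ler_pM2l ?bernoulli.
rewrite ler_pM2r ?invr_gt0 // ler_pM2l // ler_nat.
by rewrite -[X in (_ <= X)%N](card_ord T) max_card.
Qed.

End MinusSignSearch.

Theorem proposition2 (C : nat) (hC : (2 <= C)%N) :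
  exists c : rat, 0 < c /\
  forall (n : nat), (1 <= n)%N ->
  forall (T : nat) (f : 'I_T -> 'I_C)
         (E : 'I_C -> mss_basis n T -> mss_basis n T -> algC),
    is_povm E ->
    (forall kstar : 'I_C,
        9%:R / 10%:R <= outcome_prob E (@mss_state n C T f kstar) kstar) ->
    c * (2 ^ n)%:R <= T%:R.
Proof.
exists (7 / 80); split; first by rewrite divr_gt0.
move=> n n_ge1 T f E E_povm success.
pose k0 : 'I_C := Ordinal (ltnW hC); pose k1 : 'I_C := Ordinal hC.
have k01 : k0 != k1 by [].
have dist_ge := povm_distinguish E_povm k01 (dotC_mss_state_id n f k1)
                  (success k0) (success k1).
have d_gt0 : (0 : algC) < (2 ^ n)%:R by rewrite ltr0n expn_gt0.
have := le_trans dist_ge (dotC_mss_state_sub_le f k0 k1 n_ge1).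
rewrite (ler_pdivlMr _ _ d_gt0) => key.
rewrite -(ler_rat algC) rmorphM fmorph_div !rmorph_nat.
rewrite -(@ler_pM2l _ 4); last by rewrite ltr0n.
by rewrite mulrA [_ * (7 / 80)](_ : _ = 9 / 10 / 2 - (1 - 9 / 10)) //; field.
Qed.
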